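(* If $G$ is a gate and $v\in V(G)$, then $v$ belongs to exactly two cliques of $G$, and if $C_1$ and $C_2$ are these two cliques then $C_1\cap C_2=\{v\}$.
   Context: All graphs are finite and simple. A clique is a maximal complete set of vertices. Gates are defined recursively: (i) every chordless cycle $C_n$ with $n\geq 4$ is a gate; (ii) if $H$ is a gate, $C$ and $C'$ are disjoint cliques of $H$, and $P=(v_1,\dots,v_l)$ with $l\geq 2$ is a chordless path vertex-disjoint from $H$, then the union of $H$ and $P$ together with all edges between $v_1$ and the vertices of $C$ and all edges between $v_l$ and the vertices of $C'$ is a gate; (iii) there are no other gates. *)

(* Graphs: a finite simple graph is given by a vertex set
   V : {set T} inside an ambient finType T and an adjacency relation E : rel T
   (symmetric, irreflexive, supported on V).  Gates are an inductive predicate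
   on such (V, E); fresh path vertices are taken from T :\: V. *)
From mathcomp Require Import all_boot.
Set Implicit Arguments. Unset Strict Implicit. Unset Printing Implicit Defensive.

Section Gates.
Variable T : finType.

Definition complete (E : rel T) (S : {set T}) : Prop :=
  forall x y, x \in S -> y \in S -> x != y -> E x y.

Definition clique (V : {set T}) (E : rel T) (C : {set T}) : Prop :=
  [/\ C \subset V, complete E C &
      forall D : {set T}, C \subset D -> D \subset V -> complete E D -> D = C].

Definition cycle_rel (c : seq T) : rel T := fun x y =>
  [&& x \in c, y \in c &
      (index y c == (index x c).+1 %% size c) ||
      (index x c == (index y c).+1 %% size c)].

Definition path_rel (p : seq T) : rel T := fun x y =>
  [&& x \in p, y \in p &
      (index y p == (index x p).+1) || (index x p == (index y p).+1)].

Definition attach_rel (v : T) (S : {set T}) : rel T := fun x y =>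
  ((x == v) && (y \in S)) || ((y == v) && (x \in S)).

Definition gate_ext (E : rel T) (a : T) (s : seq T) (C C' : {set T}) : rel T :=
  fun x y => [|| E x y, path_rel (a :: s) x y,
                 attach_rel a C x y | attach_rel (last a s) C' x y].

Inductive gate : {set T} -> rel T -> Prop :=
| gate_cycle (c : seq T) :
    uniq c -> 4 <= size c -> gate [set x in c] (cycle_rel c)
| gate_add (V : {set T}) (E : rel T) (C C' : {set T}) (a : T) (s : seq T) :
    gate V E -> clique V E C -> clique V E C' -> [disjoint C & C'] ->
    uniq (a :: s) -> 1 <= size s -> [disjoint [set x in a :: s] & V] ->
    gate (V :|: [set x in a :: s]) (gate_ext E a s C C').

End Gates.

From mathcomp Require Import all_boot zify.
Set Implicit Arguments. Unset Strict Implicit. Unset Printing Implicit Defensive.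

(* A vertex v whose neighbourhood is A ∪ {x}, with A complete and x adjacent
   to no vertex of A, lies in exactly two cliques, v ∪ A and {v, x}, which meet
   in v.  This applies to every vertex of a chordless cycle and to every vertex
   of an added path: there A and x are the two path neighbours, except at an
   end, where A is the attached clique.  For an old vertex v, the cliques of the
   extended gate through v are its old cliques, with the first (resp. last) path
   vertex adjoined to the attached clique C (resp. C'), so v keeps the property. *)

Section Cliques.
Variable T : finType.
Implicit Types (V A C D K : {set T}) (E : rel T).

Definition two_cliques_at V E v := exists C1 C2 : {set T},
  [/\ C1 != C2, clique V E C1, clique V E C2 & v \in C1 /\ v \in C2] /\
  (forall C, clique V E C -> v \in C -> C = C1 \/ C = C2) /\
  C1 :&: C2 = [set v].

Lemma completeP E C :
  reflect (complete E C) [forall x in C, forall y in C, (x != y) ==> E x y].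
Proof.
apply: (iffP forall_inP) => cC.
- by move=> x y xC yC; have /forall_inP/(_ y yC)/implyP := cC x xC.
- by move=> x xC; apply/forall_inP => y yC; apply/implyP; exact: cC.
Qed.

Lemma complete_set1 E x : complete E [set x].
Proof. by move=> y z; rewrite !inE => /eqP-> /eqP->; rewrite eqxx. Qed.

Lemma extend_clique V E K : K \subset V -> complete E K ->
  exists2 D, clique V E D & K \subset D.
Proof.
move=> KV cK.
pose P D := [&& K \subset D, D \subset V & [forall x in D, forall y in D, (x != y) ==> E x y]].
have PK : P K by rewrite /P subxx KV; apply/completeP.
case: (arg_maxnP (fun D => #|D|) PK) => D /and3P[KD DV /completeP cD] Dmax.
exists D => //; split=> // D' DD' D'V cD'.
apply/eqP; rewrite eq_sym eqEcard DD' /=.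
by apply: Dmax; rewrite /P D'V (subset_trans KD DD'); apply/completeP.
Qed.

Lemma clique_subV V E C : clique V E C -> C \subset V.
Proof. by case. Qed.

Lemma clique_memV V E C x : clique V E C -> x \in C -> x \in V.
Proof. by move/clique_subV/subsetP; apply. Qed.

Lemma clique_memNV V E C x : clique V E C -> x \notin V -> (x \in C) = false.
Proof. by move=> clC; apply: contraNF; exact: clique_memV clC. Qed.

Lemma clique_neq0 V E C : V != set0 -> clique V E C -> C != set0.
Proof.
case/set0Pn => x xV [_ _ Cmax]; apply/negP => /eqP C0.
have := Cmax [set x]; rewrite C0 sub0set sub1set => /(_ isT xV (@complete_set1 E x)).
by move/setP/(_ x); rewrite !inE eqxx.
Qed.

Lemma clique_subset_eq V E C K :
  clique V E C -> K \subset V -> complete E K -> C \subset K -> K = C.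
Proof. by case=> _ _ Cmax KV cK CK; exact: Cmax. Qed.

Section TwoCliques.
Variables (V : {set T}) (E : rel T) (v : T) (K1 K2 : {set T}).
Hypotheses (K1V : K1 \subset V) (K2V : K2 \subset V).
Hypotheses (cK1 : complete E K1) (cK2 : complete E K2).
Hypotheses (vK1 : v \in K1) (vK2 : v \in K2).
Hypotheses (nK12 : ~~ (K1 \subset K2)) (nK21 : ~~ (K2 \subset K1)).
Hypothesis covered : forall D, complete E D -> v \in D -> D \subset K1 \/ D \subset K2.
Hypothesis K12 : K1 :&: K2 = [set v].

Lemma clique_cover1 : clique V E K1.
Proof.
split=> // D K1D DV cD; have vD := subsetP K1D v vK1.
case: (covered cD vD) => DK; first by apply/eqP; rewrite eqEsubset DK.
by move: nK12; rewrite (subset_trans K1D DK).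
Qed.

Lemma clique_cover2 : clique V E K2.
Proof.
split=> // D K2D DV cD; have vD := subsetP K2D v vK2.
case: (covered cD vD) => DK; last by apply/eqP; rewrite eqEsubset DK.
by move: nK21; rewrite (subset_trans K2D DK).
Qed.

Lemma two_cliques_at_cover : two_cliques_at V E v.
Proof.
have cl1 := clique_cover1; have cl2 := clique_cover2.
exists K1, K2; split; [split|split] => //.
- by apply: contraNneq nK12 => ->.
- move=> C clC vC; have [_ cC _] := clC.
  case: (covered cC vC) => CK; [left|right]; apply/esym.
  + exact: clique_subset_eq clC K1V cK1 CK.
  + exact: clique_subset_eq clC K2V cK2 CK.
Qed.

End TwoCliques.

Lemma two_cliques_at_nbhd V E v A x :
  symmetric E -> v \in V -> x \in V -> A \subset V -> A != set0 ->
  x \notin A -> x != v -> v \notin A -> complete E A ->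
  (forall c, c \in A -> ~~ E x c) ->
  (forall y, y != v -> E v y = (y \in A) || (y == x)) ->
  two_cliques_at V E v.
Proof.
move=> Esym vV xV AV /set0Pn[c cA] xA xv vA compA xAn nbhd.
have nbhdA : forall y, y \in A -> E v y.
  by move=> y yA; rewrite nbhd ?yA //; apply: contraNneq vA => <-.
apply: (@two_cliques_at_cover _ _ v (v |: A) [set v; x]).
- by rewrite subUset sub1set vV.
- by rewrite subUset !sub1set vV.
- move=> y z; rewrite !inE => /predU1P[->|yA] /predU1P[->|zA]; rewrite ?eqxx //.
  + by move=> _; exact: nbhdA.
  + by move=> _; rewrite Esym; exact: nbhdA.
  + exact: compA.
- move=> y z; rewrite !inE => /predU1P[->|/eqP->] /predU1P[->|/eqP->]; rewrite ?eqxx //.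
  + by rewrite nbhd // eqxx orbT.
  + by rewrite Esym nbhd // eqxx orbT.
- exact: setU11.
- by rewrite !inE eqxx.
- apply/subsetP => /(_ c); rewrite !inE cA orbT => /(_ isT) /predU1P[cv|/eqP cx].
  + by rewrite -cv cA in vA.
  + by rewrite -cx cA in xA.
- by apply/subsetP => /(_ x); rewrite !inE eqxx orbT (negbTE xv) (negbTE xA) => /(_ isT).
- move=> D cD vD; case: (boolP (x \in D)) => xD; [right|left];
    apply/subsetP => y yD; rewrite !inE; have [//|yv] := eqVneq y v;
    have := cD v y vD yD; rewrite eq_sym yv nbhd // => /(_ isT).
  + by case/orP=> [yA|//]; move: (xAn y yA); rewrite cD // eq_sym; apply: contraNneq xA => <-.
  + by case/orP=> [//|/eqP yx]; rewrite -yx yD in xD.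
- apply/setP => y; rewrite !inE; case: (eqVneq y v) => //= yv.
  by case: (eqVneq y x) => [->|]; rewrite ?(negbTE xA) ?andbF.
Qed.

End Cliques.

Lemma modn_succ k n : k < n -> k.+1 %% n = if k.+1 < n then k.+1 else 0.
Proof.
move=> kn; case: ltnP => h; first by rewrite modn_small.
have -> : k.+1 = n by apply/eqP; rewrite eqn_leq kn h.
by rewrite modnn.
Qed.

Section Cycle.
Variables (T : finType) (c : seq T).
Hypotheses (uc : uniq c) (c4 : 4 <= size c).

Local Notation n := (size c).

Lemma cycle_rel_sym : symmetric (cycle_rel c).
Proof. by move=> x y; rewrite /cycle_rel andbCA orbC. Qed.

Lemma cycle_rel_nth x0 j k : j < n -> k < n ->
  cycle_rel c (nth x0 c j) (nth x0 c k) =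
  (k == if j.+1 < n then j.+1 else 0) || (j == if k.+1 < n then k.+1 else 0).
Proof.
by move=> jn kn; rewrite /cycle_rel !mem_nth // !index_uniq // !modn_succ.
Qed.

Lemma two_cliques_at_cycle v : v \in c -> two_cliques_at [set x in c] (cycle_rel c) v.
Proof.
(* nthP states the bound with [size c] at the eqType carrier, an atom that lia
   would not identify with [n]. *)
move=> /(nthP v) [i i_n <-]; have {}i_n : i < n := i_n.
pose next_i := if i.+1 < n then i.+1 else 0.
pose prev_i := if i == 0 then n.-1 else i.-1.
have next_i_n : next_i < n by rewrite /next_i; case: ifP => //; lia.
have prev_i_n : prev_i < n by rewrite /prev_i; case: ifP => //; lia.
have nthE j k : j < n -> k < n -> (nth v c j == nth v c k) = (j == k).
  by move=> jn kn; rewrite nth_uniq.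
have inc j : j < n -> nth v c j \in [set x in c] by move=> jn; rewrite inE mem_nth.
apply: (@two_cliques_at_nbhd _ _ _ _ [set nth v c prev_i] (nth v c next_i)).
- exact: cycle_rel_sym.
- exact: inc.
- exact: inc.
- by rewrite sub1set inc.
- by apply/set0Pn; exists (nth v c prev_i); rewrite inE.
- by rewrite inE nthE // /next_i /prev_i; case: ifP; case: ifP; lia.
- by rewrite nthE // /next_i; case: ifP; lia.
- by rewrite inE nthE // /prev_i; case: ifP; lia.
- exact: complete_set1.
- move=> y; rewrite inE => /eqP->; rewrite cycle_rel_nth // /next_i /prev_i.
  by case: ifP; case: ifP; try case: ifP; try case: ifP; lia.
- move=> y yi; rewrite inE.
  have [yc|ync] := boolP (y \in c); last first.
    rewrite /cycle_rel (negbTE ync) andbF.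
    have ny j : j < n -> (y == nth v c j) = false.
      by move=> jn; apply: contraNF ync => /eqP->; rewrite mem_nth.
    by rewrite !ny.
  have /(nthP v) [j jn <-] := yc; have {}jn : j < n := jn.
  move: yi; rewrite cycle_rel_nth // !nthE // /next_i /prev_i.
  by case: ifP; case: ifP; try case: ifP; try case: ifP; lia.
Qed.

End Cycle.

Section Extension.
Variables (T : finType) (V : {set T}) (E : rel T) (C C' : {set T}) (a : T) (s : seq T).
Hypotheses (Esym : symmetric E) (Esupp : forall x y, E x y -> x \in V).
Hypotheses (V0 : V != set0) (clC : clique V E C) (clC' : clique V E C').
Hypotheses (disCC' : [disjoint C & C']) (up : uniq (a :: s)) (s1 : 1 <= size s).
Hypothesis disPV : [disjoint [set x in a :: s] & V].

Local Notation p := (a :: s).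
Local Notation b := (last a s).
Local Notation E' := (gate_ext E a s C C').
Local Notation V' := (V :|: [set x in a :: s]).

Lemma path_notin_old x : x \in p -> x \notin V.
Proof. by move=> xp; rewrite (disjointFr disPV) // inE. Qed.

Lemma old_notin_path x : x \in V -> x \notin p.
Proof. by apply: contraTN => /path_notin_old. Qed.

Lemma old_neq_path x y : x \in V -> y \in p -> (x == y) = false.
Proof. by move=> xV yp; apply: contraTF xV => /eqP->; exact: path_notin_old. Qed.

Lemma last_neq_head : b != a.
Proof. by rewrite (last_nth a) /= -[a in _ != a]/(nth a p 0) nth_uniq //=; lia. Qed.

Lemma gate_ext_sym : symmetric E'.
Proof.
move=> x y; rewrite /gate_ext Esym /path_rel /attach_rel andbCA.
by rewrite [_ || (index x _ == _)]orbC [(y == a) && _ || _]orbC [(y == b) && _ || _]orbC.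
Qed.

Lemma gate_ext_old x y : x \in V -> y \in V -> E' x y = E x y.
Proof.
move=> xV yV; rewrite /gate_ext /path_rel /attach_rel (negbTE (old_notin_path xV)).
by rewrite !(old_neq_path _ (mem_head _ _)) ?(old_neq_path _ (mem_last _ _)) //= !orbF.
Qed.

Lemma gate_ext_path x y : x \in p ->
  E' x y = [|| path_rel p x y, (x == a) && (y \in C) | (x == b) && (y \in C')].
Proof.
move=> xp; have xV := path_notin_old xp.
rewrite /gate_ext /attach_rel (clique_memNV clC xV) (clique_memNV clC' xV) !andbF !orbF.
by rewrite (contraNF (@Esupp x y)).
Qed.

Lemma gate_ext_path_old x y : x \in p -> y \in V ->
  E' x y = ((x == a) && (y \in C)) || ((x == b) && (y \in C')).
Proof.
by move=> xp yV; rewrite gate_ext_path // /path_rel (negbTE (old_notin_path yV)) andbF.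
Qed.

Lemma attach_cliques_neq : C != C'.
Proof.
have /set0Pn[x xC] := clique_neq0 V0 clC.
by apply: contraTneq disCC' => CC'; apply/pred0Pn; exists x; rewrite /= -CC' xC.
Qed.

Definition ext_clique (D : {set T}) : {set T} :=
  D :|: [set x | ((x == a) && (D == C)) || ((x == b) && (D == C'))].

Lemma mem_ext_clique_old D y : y \in V -> (y \in ext_clique D) = (y \in D).
Proof.
move=> yV; rewrite !inE !(old_neq_path yV) ?mem_head ?mem_last //=.
by rewrite !orbF.
Qed.

Lemma mem_ext_clique_new D y : clique V E D -> y \notin V ->
  (y \in ext_clique D) = ((y == a) && (D == C)) || ((y == b) && (D == C')).
Proof.
by move=> clD yV; rewrite !inE (clique_memNV clD yV).
Qed.

Lemma ext_clique_new_path D y : clique V E D -> y \notin V ->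
  y \in ext_clique D -> y \in p.
Proof.
move=> clD yV; rewrite mem_ext_clique_new //.
by case/orP=> /andP[/eqP-> _]; rewrite ?mem_head ?mem_last.
Qed.

Lemma complete_ext_clique D : clique V E D -> complete E' (ext_clique D).
Proof.
move=> clD; have [_ cD _] := clD.
have new_old x y : x \notin V -> x \in ext_clique D -> y \in D -> E' x y.
  move=> xV xD yD; have yV := clique_memV clD yD.
  rewrite gate_ext_path_old ?(ext_clique_new_path clD) //.
  by move: xD; rewrite mem_ext_clique_new // => /orP[]/andP[-> /eqP<-]; rewrite yD ?orbT.
move=> x y xD yD xy.
have [xV|xV] := boolP (x \in V); have [yV|yV] := boolP (y \in V).
- rewrite gate_ext_old //; apply: cD => //; by rewrite -mem_ext_clique_old.
- by rewrite gate_ext_sym; apply: new_old => //; rewrite -(mem_ext_clique_old D xV).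
- by apply: new_old => //; rewrite -(mem_ext_clique_old D yV).
- move: xD yD xy; rewrite !mem_ext_clique_new //.
  case/orP=> /andP[/eqP-> /eqP DC]; case/orP=> /andP[/eqP-> /eqP DC']; rewrite ?eqxx //.
  + by move: attach_cliques_neq; rewrite -DC DC' eqxx.
  + by move: attach_cliques_neq; rewrite -DC' DC eqxx.
Qed.

Lemma complete_ext_old (K : {set T}) : K \subset V -> complete E K -> complete E' K.
Proof.
by move=> /subsetP KV cK x y xK yK xy; rewrite gate_ext_old ?KV //; exact: cK.
Qed.

Lemma complete_restrict_old K : complete E' K -> complete E (K :&: V).
Proof.
move=> cK x y; rewrite !inE => /andP[xK xV] /andP[yK yV] xy.
by rewrite -gate_ext_old //; exact: cK.
Qed.

Lemma path_adj_clique D y : clique V E D -> y \in p ->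
  (forall z, z \in D -> E' y z) -> (y == a) && (D == C) || (y == b) && (D == C').
Proof.
move=> clD yp adj; have /set0Pn[d dD] := clique_neq0 V0 clD.
have adjE z : z \in D -> ((y == a) && (z \in C)) || ((y == b) && (z \in C')).
  by move=> zD; rewrite -gate_ext_path_old ?adj //; exact: clique_memV clD zD.
have DA A : clique V E A -> {subset D <= A} -> D == A.
  move=> [AV cA _] DA; apply/eqP/esym/(clique_subset_eq clD AV cA).
  exact/subsetP.
have ba := negbTE last_neq_head; have ab : (a == b) = false by rewrite eq_sym.
case/orP: (adjE d dD) => /andP[/eqP ya _]; subst y.
- rewrite eqxx (DA C) // => z /adjE; by rewrite eqxx ab orbF.
- rewrite eqxx (DA C') ?orbT // => z /adjE; by rewrite eqxx ba.
Qed.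

Lemma clique_ext_clique D : clique V E D -> clique V' E' (ext_clique D).
Proof.
move=> clD; have DV := clique_subV clD.
split; last 1 first.
- move=> K DK KV' cK; apply/eqP; rewrite eqEsubset DK andbT; apply/subsetP => y yK.
  have [yV|yV] := boolP (y \in V).
  + have KVD : K :&: V = D.
      apply: clique_subset_eq clD (subsetIr _ _) (complete_restrict_old cK) _.
      by rewrite subsetI DV (subset_trans _ DK) ?subsetUl.
    by rewrite mem_ext_clique_old // -KVD inE yK.
  + have yp : y \in p by move: (subsetP KV' y yK); rewrite !inE (negbTE yV).
    rewrite mem_ext_clique_new // path_adj_clique // => z zD; apply: cK => //.
    * by apply: (subsetP DK); rewrite inE zD.
    * by apply: contraNneq yV => ->; exact: clique_memV clD zD.
- apply/subsetP => y yD; have [yV|yV] := boolP (y \in V); first by rewrite inE yV.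
  by rewrite in_setU in_set (ext_clique_new_path clD yV yD) orbT.
- exact: complete_ext_clique.
Qed.

Section OldVertexCliques.
Variables (K : {set T}) (v : T).
Hypotheses (KV' : K \subset V') (cK : complete E' K) (vK : v \in K) (vV : v \in V).

Lemma new_in_clique_adj y : y \in K -> y \notin V ->
  ((y == a) && (v \in C)) || ((y == b) && (v \in C')).
Proof.
move=> yK yV.
have yp : y \in p by move: (subsetP KV' y yK); rewrite in_setU in_set (negbTE yV).
rewrite -gate_ext_path_old // cK //; apply: contraNneq yV => ->; exact: vV.
Qed.

Lemma head_in_clique_subset : a \in K -> K \subset ext_clique C.
Proof.
move=> aK; have aV := path_notin_old (mem_head a s).
have ab : (a == b) = false by rewrite eq_sym (negbTE last_neq_head).
have vC : v \in C by move: (new_in_clique_adj aK aV); rewrite eqxx ab orbF.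
apply/subsetP => y yK; have [yV|yV] := boolP (y \in V).
  rewrite mem_ext_clique_old //; move: (cK aK yK).
  by rewrite gate_ext_path_old ?mem_head // eqxx ab orbF; apply; apply: contraNneq aV => ->.
rewrite mem_ext_clique_new // !eqxx andbT.
case/orP: (new_in_clique_adj yK yV) => /andP[ye vC']; first by rewrite ye.
by rewrite (disjointFr disCC' vC) in vC'.
Qed.

Lemma last_in_clique_subset : b \in K -> K \subset ext_clique C'.
Proof.
move=> bK; have bV := path_notin_old (mem_last a s).
have ba := negbTE last_neq_head.
have vC' : v \in C' by move: (new_in_clique_adj bK bV); rewrite eqxx ba.
apply/subsetP => y yK; have [yV|yV] := boolP (y \in V).
  rewrite mem_ext_clique_old //; move: (cK bK yK).
  by rewrite gate_ext_path_old ?mem_last // eqxx ba; apply; apply: contraNneq bV => ->.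
rewrite mem_ext_clique_new // !eqxx andbT.
case/orP: (new_in_clique_adj yK yV) => /andP[ye vC]; last by rewrite ye orbT.
by rewrite (disjointFr disCC' vC) in vC'.
Qed.

Lemma clique_avoiding_ends_old : a \notin K -> b \notin K -> K \subset V.
Proof.
move=> aK bK; apply/subsetP => y yK; apply/contraT => yV.
case/orP: (new_in_clique_adj yK yV) => /andP[/eqP ye _].
- by rewrite -ye yK in aK.
- by rewrite -ye yK in bK.
Qed.

End OldVertexCliques.

Lemma clique_ext_old K v : clique V' E' K -> v \in K -> v \in V ->
  exists2 D, clique V E D & K = ext_clique D.
Proof.
move=> [KV' cK Kmax] vK vV.
suff [D clD KD] : exists2 D, clique V E D & K \subset ext_clique D.
  by exists D => //; apply/esym/Kmax => //;
    [exact: clique_subV (clique_ext_clique clD) | exact: complete_ext_clique].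
have [aK|aK] := boolP (a \in K); first by exists C => //; exact: head_in_clique_subset vV aK.
have [bK|bK] := boolP (b \in K); first by exists C' => //; exact: last_in_clique_subset vV bK.
have KV := clique_avoiding_ends_old KV' cK vK vV aK bK.
have cKV : complete E K by rewrite -(setIidPl KV); exact: complete_restrict_old.
have [D clD KD] := extend_clique KV cKV.
by exists D => //; rewrite (subset_trans KD) ?subsetUl.
Qed.

Lemma ext_clique_inj D1 D2 : clique V E D1 -> clique V E D2 ->
  ext_clique D1 = ext_clique D2 -> D1 = D2.
Proof.
move=> cl1 cl2 /setP e12; apply/setP => y; have [yV|yV] := boolP (y \in V).
  by rewrite -(mem_ext_clique_old D1 yV) -(mem_ext_clique_old D2 yV) e12.
by rewrite (clique_memNV cl1 yV) (clique_memNV cl2 yV).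
Qed.

Lemma ext_clique_new_separate D1 D2 y : clique V E D1 -> clique V E D2 -> D1 != D2 ->
  y \notin V -> y \in ext_clique D1 -> y \in ext_clique D2 -> False.
Proof.
move=> cl1 cl2 D12 yV; rewrite !mem_ext_clique_new //.
have ba := last_neq_head.
case/orP=> /andP[/eqP-> /eqP e1] /orP[] /andP[/eqP ye /eqP e2].
- by rewrite e1 e2 eqxx in D12.
- by rewrite -ye eqxx in ba.
- by rewrite ye eqxx in ba.
- by rewrite e1 e2 eqxx in D12.
Qed.

Lemma two_cliques_at_ext_old v : v \in V -> two_cliques_at V E v -> two_cliques_at V' E' v.
Proof.
move=> vV [D1 [D2 [[D12 cl1 cl2 [v1 v2]] [all12 I12]]]].
exists (ext_clique D1), (ext_clique D2); split; [split|split].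
- by apply: contraNneq D12 => /(ext_clique_inj cl1 cl2)->.
- exact: clique_ext_clique.
- exact: clique_ext_clique.
- by rewrite !mem_ext_clique_old.
- move=> K clK vK; have [D clD KD] := clique_ext_old clK vK vV.
  move: vK; rewrite KD mem_ext_clique_old // => /(all12 D clD).
  by case=> ->; [left|right].
- apply/setP => y; rewrite in_setI in_set1; have [yV|yV] := boolP (y \in V).
    by rewrite !mem_ext_clique_old // -in_setI I12 in_set1.
  apply/andP/eqP => [[y1 y2]|yv]; last by rewrite yv vV in yV.
  by case: (ext_clique_new_separate cl1 cl2 D12 yV y1 y2).
Qed.

Local Notation pt j := (nth a p j).

Lemma eq_pt j k : j < size p -> k < size p -> (pt j == pt k) = (j == k).
Proof. by move=> jn kn; rewrite nth_uniq. Qed.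

Lemma pt_last : pt (size s) = b.
Proof. by rewrite (last_nth a). Qed.

Lemma pt_notin_old k : k < size p -> pt k \notin V.
Proof. by move=> kn; rewrite path_notin_old ?mem_nth. Qed.

Lemma pt_in_ext k : k < size p -> pt k \in V'.
Proof. by move=> kn; rewrite in_setU in_set mem_nth ?orbT. Qed.

Lemma pt_notin_clique D k : clique V E D -> k < size p -> (pt k \in D) = false.
Proof. by move=> clD kn; rewrite (clique_memNV clD (pt_notin_old kn)). Qed.

Lemma gate_ext_pt j k : j < size p -> k < size p ->
  E' (pt j) (pt k) = (k == j.+1) || (j == k.+1).
Proof.
move=> jn kn; rewrite gate_ext_path ?mem_nth // !pt_notin_clique // !andbF !orbF.
by rewrite /path_rel !mem_nth // !index_uniq.
Qed.

Lemma gate_ext_pt_old j y : j < size p -> y \in V ->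
  E' (pt j) y = ((j == 0) && (y \in C)) || ((j == size s) && (y \in C')).
Proof.
move=> jn yV; rewrite gate_ext_path_old ?mem_nth // -pt_last eq_pt //.
by rewrite -[a in pt j == a]/(pt 0) eq_pt.
Qed.

Lemma gate_ext_pt_out j y : j < size p -> y \notin V' -> E' (pt j) y = false.
Proof.
move=> jn; rewrite in_setU in_set negb_or => /andP[yV yp].
rewrite gate_ext_path ?mem_nth // /path_rel (negbTE yp) andbF /=.
by rewrite (clique_memNV clC yV) (clique_memNV clC' yV) !andbF.
Qed.

Lemma ext_vertex_ind (P : T -> Prop) :
  (forall y, y \in V -> P y) -> (forall k, k <= size s -> P (pt k)) ->
  (forall y, y \notin V' -> P y) -> forall y, P y.
Proof.
move=> Pold Ppt Pout y; have [yV|yV] := boolP (y \in V'); last exact: Pout.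
move: yV; rewrite in_setU in_set => /orP[/Pold //|/(nthP a)[k kn <-]].
exact: Ppt.
Qed.

Lemma gate_ext_out_nbhd i (A : {set T}) x y : i < size p -> A \subset V' -> x \in V' ->
  y \notin V' -> E' (pt i) y = (y \in A) || (y == x).
Proof.
move=> iP /subsetP AV' xV' yV'; rewrite gate_ext_pt_out //.
rewrite (contraNF (@AV' y) yV'); apply/esym/negbTE.
by apply: contraNneq yV' => ->.
Qed.

Lemma ext_sub_old (A : {set T}) : A \subset V -> A \subset V'.
Proof. by move=> AV; rewrite (subset_trans AV) ?subsetUl. Qed.

Lemma two_cliques_at_head : two_cliques_at V' E' (pt 0).
Proof.
have p1 : 1 < size p by rewrite /= ltnS.
have CV := clique_subV clC.
apply: (@two_cliques_at_nbhd _ _ _ _ C (pt 1)).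
- exact: gate_ext_sym.
- exact: pt_in_ext.
- exact: pt_in_ext.
- exact: ext_sub_old.
- exact: clique_neq0 V0 clC.
- by rewrite pt_notin_clique.
- by rewrite eq_pt.
- by rewrite pt_notin_clique.
- by apply: complete_ext_old; case: clC.
- move=> c cC; rewrite gate_ext_pt_old ?(subsetP CV) //=.
  by rewrite (disjointFr disCC' cC) andbF.
- apply: ext_vertex_ind => [y yV|k kn|y yV'] _.
  + have s0 : (0 == size s) = false by lia.
    by rewrite gate_ext_pt_old // s0 orbF (old_neq_path yV) ?mem_nth ?orbF.
  + by rewrite gate_ext_pt // pt_notin_clique // eq_pt //= orbF.
  + by apply: gate_ext_out_nbhd => //; [exact: ext_sub_old | exact: pt_in_ext].
Qed.

Lemma two_cliques_at_last : two_cliques_at V' E' (pt (size s)).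
Proof.
have pl : size s < size p by [].
have pl' : (size s).-1 < size p by rewrite /=; lia.
have C'V := clique_subV clC'.
apply: (@two_cliques_at_nbhd _ _ _ _ C' (pt (size s).-1)).
- exact: gate_ext_sym.
- exact: pt_in_ext.
- exact: pt_in_ext.
- exact: ext_sub_old.
- exact: clique_neq0 V0 clC'.
- by rewrite pt_notin_clique.
- by rewrite eq_pt //; lia.
- by rewrite pt_notin_clique.
- by apply: complete_ext_old; case: clC'.
- move=> c cC'; rewrite gate_ext_pt_old ?(subsetP C'V) //.
  by rewrite (disjointFl disCC' cC') andbF /=; lia.
- apply: ext_vertex_ind => [y yV|k kn|y yV'] yl.
  + have s0 : (size s == 0) = false by lia.
    by rewrite gate_ext_pt_old // s0 eqxx (old_neq_path yV) ?mem_nth ?orbF.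
  + rewrite gate_ext_pt // pt_notin_clique // eq_pt //=.
    by move: yl; rewrite eq_pt //; lia.
  + by apply: gate_ext_out_nbhd => //; [exact: ext_sub_old | exact: pt_in_ext].
Qed.

Lemma two_cliques_at_inner i : 0 < i < size s -> two_cliques_at V' E' (pt i).
Proof.
move=> /andP[i0 i_s].
have ip : i < size p by rewrite /=; lia.
have ip' : i.-1 < size p by rewrite /=; lia.
have ip'' : i.+1 < size p by rewrite /=; lia.
apply: (@two_cliques_at_nbhd _ _ _ _ [set pt i.-1] (pt i.+1)).
- exact: gate_ext_sym.
- exact: pt_in_ext.
- exact: pt_in_ext.
- by rewrite sub1set pt_in_ext.
- by apply/set0Pn; exists (pt i.-1); rewrite inE.
- by rewrite inE eq_pt //; lia.
- by rewrite eq_pt //; lia.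
- by rewrite inE eq_pt //; lia.
- exact: complete_set1.
- by move=> c; rewrite inE => /eqP->; rewrite gate_ext_pt //; lia.
- apply: ext_vertex_ind => [y yV|k kn|y yV'] yi.
  + rewrite gate_ext_pt_old // inE !(old_neq_path yV) ?mem_nth //.
    by apply/negbTE; lia.
  + rewrite gate_ext_pt // inE !eq_pt //.
    by move: yi; rewrite eq_pt //; lia.
  + by apply: gate_ext_out_nbhd => //; [rewrite sub1set | ]; exact: pt_in_ext.
Qed.

Lemma two_cliques_at_path v : v \in p -> two_cliques_at V' E' v.
Proof.
move=> /(nthP a)[i ip <-]; have {}ip : i <= size s := ip.
have [-> | i0] := eqVneq i 0; first exact: two_cliques_at_head.
have [-> | i_s] := eqVneq i (size s); first exact: two_cliques_at_last.
by apply: two_cliques_at_inner; lia.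
Qed.

Lemma gate_ext_supp x y : E' x y -> x \in V'.
Proof.
have inP z : z \in p -> z \in V' by move=> zp; rewrite in_setU in_set zp orbT.
have inD D z : clique V E D -> z \in D -> z \in V'.
  by move=> clD /(clique_memV clD) zV; rewrite in_setU zV.
case/or4P => [/Esupp xV | /and3P[xp _ _] | /orP[] /andP[] | /orP[] /andP[]].
- by rewrite in_setU xV.
- exact: inP.
- by move=> /eqP-> _; rewrite inP ?mem_head.
- by move=> _; exact: inD clC.
- by move=> /eqP-> _; rewrite inP ?mem_last.
- by move=> _; exact: inD clC'.
Qed.

End Extension.

Lemma gate_graph (T : finType) (V : {set T}) (E : rel T) : gate V E ->
  [/\ symmetric E, forall x y, E x y -> x \in V & V != set0].
Proof.
elim=> {V E} [c uc c4 | V E C C' a s _ [Esym Esupp V0] clC clC' _ _ _ disPV].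
- split; first exact: cycle_rel_sym.
  + by move=> x y /and3P[xc _ _]; rewrite inE.
  + by case: c uc c4 => // x c _ _; apply/set0Pn; exists x; rewrite inE mem_head.
- split; first exact: gate_ext_sym.
  + exact: gate_ext_supp.
  + by apply/set0Pn; exists a; rewrite in_setU in_set mem_head orbT.
Qed.

Theorem lemma5 (T : finType) (V : {set T}) (E : rel T) :
  gate V E ->
  forall v, v \in V ->
  exists C1 C2 : {set T},
    [/\ C1 != C2, clique V E C1, clique V E C2 & v \in C1 /\ v \in C2] /\
    (forall C, clique V E C -> v \in C -> C = C1 \/ C = C2) /\
    C1 :&: C2 = [set v].
Proof.
elim=> {V E} [c uc c4 v | V E C C' a s g IH clC clC' disCC' up s1 disPV v].
  by rewrite inE; exact: two_cliques_at_cycle.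
have [Esym Esupp V0] := gate_graph g.
rewrite in_setU in_set => /orP[vV | vp].
- exact: two_cliques_at_ext_old (IH v vV).
- exact: two_cliques_at_path.
Qed.
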